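(* Let $S$ be a semigroup with a left fairly invariant finitely-additive probability measure $\mu$, and let $T$ be a subsemigroup of $S$ with $\mu(T)>0$. Then $T$ is left fairly amenable. The same holds with ''right'' in place of ''left''.
   Context: For a semigroup $U$, $s\in U$, $A\subseteq U$: $s$ acts injectively on the left (right) of $A$ if $a\mapsto sa$ ($a\mapsto as$) is injective on $A$. A finitely-additive probability measure on $U$ is $\mu:\mathcal P(U)\to[0,1]$ with $\mu(U)=1$, additive on disjoint sets; it is left fairly invariant if $\mu(sA)=\mu(A)$ whenever $s$ acts injectively on the left of $A$ (right fairly invariant analogously with $As$). $U$ is left (right) fairly amenable if such a measure exists. *)

From Stdlib Require Import Reals.
Open Scope R_scope.

Definition fa_prob_measure {U : Type} (mu : (U -> Prop) -> R) : Prop :=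
  (forall A : U -> Prop, 0 <= mu A <= 1) /\
  mu (fun _ => True) = 1 /\
  (forall A B : U -> Prop, (forall x, A x -> B x -> False) ->
     mu (fun x => A x \/ B x) = mu A + mu B).

Definition acts_inj_left {U : Type} (mul : U -> U -> U) (s : U) (A : U -> Prop) : Prop :=
  forall a b, A a -> A b -> mul s a = mul s b -> a = b.

Definition acts_inj_right {U : Type} (mul : U -> U -> U) (s : U) (A : U -> Prop) : Prop :=
  forall a b, A a -> A b -> mul a s = mul b s -> a = b.

Definition lmul_set {U : Type} (mul : U -> U -> U) (s : U) (A : U -> Prop) : U -> Prop :=
  fun y => exists a, A a /\ y = mul s a.
Definition rmul_set {U : Type} (mul : U -> U -> U) (A : U -> Prop) (s : U) : U -> Prop :=
  fun y => exists a, A a /\ y = mul a s.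

Definition left_fairly_invariant {U : Type} (mul : U -> U -> U) (mu : (U -> Prop) -> R) : Prop :=
  forall s A, acts_inj_left mul s A -> mu (lmul_set mul s A) = mu A.
Definition right_fairly_invariant {U : Type} (mul : U -> U -> U) (mu : (U -> Prop) -> R) : Prop :=
  forall s A, acts_inj_right mul s A -> mu (rmul_set mul A s) = mu A.

Definition left_fairly_amenable (U : Type) (mul : U -> U -> U) : Prop :=
  exists mu : (U -> Prop) -> R, fa_prob_measure mu /\ left_fairly_invariant mul mu.
Definition right_fairly_amenable (U : Type) (mul : U -> U -> U) : Prop :=
  exists mu : (U -> Prop) -> R, fa_prob_measure mu /\ right_fairly_invariant mul mu.

Definition associative_op {U : Type} (mul : U -> U -> U) : Prop :=
  forall x y z, mul x (mul y z) = mul (mul x y) z.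

Definition mul_closed {U : Type} (mul : U -> U -> U) (T : U -> Prop) : Prop :=
  forall x y, T x -> T y -> T (mul x y).

Definition sub_mul {U : Type} (mul : U -> U -> U) (T : U -> Prop)
  (hT : mul_closed mul T) (a b : {x : U | T x}) : {x : U | T x} :=
  exist T (mul (proj1_sig a) (proj1_sig b))
    (hT _ _ (proj2_sig a) (proj2_sig b)).

From Stdlib Require Import Reals Lra ProofIrrelevance FunctionalExtensionality PropExtensionality Classical.
Open Scope R_scope.

(* Given a finitely-additive probability measure mu on U with
   mu(T) > 0, the conditional measure  nu(B) = mu(B) / mu(T), where a subset B
   of the subsemigroup T is read as a subset of U via the inclusion, is a
   finitely-additive probability measure on T.  The inclusion commutes with
   translations, i.e. the image of sB (computed in T) is s.(image of B)
   (computed in U), and s acts injectively on B in T exactly when it acts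
   injectively on the image of B in U.  Hence fair invariance of mu passes to
   nu, on either side. *)

Lemma set_ext {X : Type} (P Q : X -> Prop) : (forall x, P x <-> Q x) -> P = Q.
Proof.
  intro H; apply functional_extensionality; intro x.
  apply propositional_extensionality; auto.
Qed.

Lemma sub_eq {U : Type} (T : U -> Prop) (a b : {x : U | T x}) :
  proj1_sig a = proj1_sig b -> a = b.
Proof.
  destruct a as [a ha], b as [b hb]; simpl; intro E; subst b.
  f_equal; apply proof_irrelevance.
Qed.

Lemma fa_measure_mono {U : Type} (mu : (U -> Prop) -> R) (A B : U -> Prop) :
  fa_prob_measure mu -> (forall x, A x -> B x) -> mu A <= mu B.
Proof.
  intros [Hrange [_ Hadd]] HAB.
  assert (Hsplit : B = (fun x => A x \/ (B x /\ ~ A x))).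
  { apply set_ext; intro x; split.
    - intro; destruct (classic (A x)); tauto.
    - intros [h | [h _]]; auto. }
  rewrite Hsplit, Hadd by (intros x ? [? ?]; tauto).
  destruct (Hrange (fun x => B x /\ ~ A x)); lra.
Qed.

Section SubsetImage.

Variables (U : Type) (T : U -> Prop).

Definition sub_image (B : {x : U | T x} -> Prop) : U -> Prop :=
  fun y => exists b, B b /\ y = proj1_sig b.

Lemma sub_image_in (B : {x : U | T x} -> Prop) (y : U) : sub_image B y -> T y.
Proof. intros [b [_ ->]]; exact (proj2_sig b). Qed.

Lemma sub_image_full : sub_image (fun _ => True) = T.
Proof.
  apply set_ext; intro y; split.
  - apply sub_image_in.
  - intro h; exists (exist T y h); auto.
Qed.

Lemma sub_image_union (A B : {x : U | T x} -> Prop) :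
  sub_image (fun x => A x \/ B x) = (fun y => sub_image A y \/ sub_image B y).
Proof.
  apply set_ext; intro y; split.
  - intros [a [[ha | ha] ->]]; [left | right]; exists a; auto.
  - intros [[a [ha ->]] | [a [ha ->]]]; exists a; auto.
Qed.

Lemma sub_image_disjoint (A B : {x : U | T x} -> Prop) :
  (forall x, A x -> B x -> False) ->
  forall y, sub_image A y -> sub_image B y -> False.
Proof.
  intros HAB y [a [ha ->]] [b [hb E]].
  apply sub_eq in E; subst; eauto.
Qed.

Variable (mul : U -> U -> U) (hT : mul_closed mul T).

Lemma sub_image_lmul (s : {x : U | T x}) (A : {x : U | T x} -> Prop) :
  sub_image (lmul_set (sub_mul mul T hT) s A)
  = lmul_set mul (proj1_sig s) (sub_image A).
Proof.
  apply set_ext; intro y; split.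
  - intros [z [[a [ha ->]] ->]]; exists (proj1_sig a); split; auto.
    exists a; auto.
  - intros [b [[a [ha ->]] ->]]; exists (sub_mul mul T hT s a); split; auto.
    exists a; auto.
Qed.

Lemma sub_image_rmul (s : {x : U | T x}) (A : {x : U | T x} -> Prop) :
  sub_image (rmul_set (sub_mul mul T hT) A s)
  = rmul_set mul (sub_image A) (proj1_sig s).
Proof.
  apply set_ext; intro y; split.
  - intros [z [[a [ha ->]] ->]]; exists (proj1_sig a); split; auto.
    exists a; auto.
  - intros [b [[a [ha ->]] ->]]; exists (sub_mul mul T hT a s); split; auto.
    exists a; auto.
Qed.

Lemma sub_image_inj_left (s : {x : U | T x}) (A : {x : U | T x} -> Prop) :
  acts_inj_left (sub_mul mul T hT) s A ->
  acts_inj_left mul (proj1_sig s) (sub_image A).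
Proof.
  intros Hinj y1 y2 [a1 [h1 ->]] [a2 [h2 ->]] E.
  f_equal; apply Hinj; auto; apply sub_eq; exact E.
Qed.

Lemma sub_image_inj_right (s : {x : U | T x}) (A : {x : U | T x} -> Prop) :
  acts_inj_right (sub_mul mul T hT) s A ->
  acts_inj_right mul (proj1_sig s) (sub_image A).
Proof.
  intros Hinj y1 y2 [a1 [h1 ->]] [a2 [h2 ->]] E.
  f_equal; apply Hinj; auto; apply sub_eq; exact E.
Qed.

End SubsetImage.

Arguments sub_image {U} T B _.

Section ConditionalMeasure.

Variables (U : Type) (mu : (U -> Prop) -> R) (T : U -> Prop).
Hypotheses (Hmu : fa_prob_measure mu) (HT : 0 < mu T).

Definition cond_measure (B : {x : U | T x} -> Prop) : R := mu (sub_image T B) / mu T.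

Lemma cond_measure_prob : fa_prob_measure cond_measure.
Proof.
  destruct Hmu as [Hrange [_ Hadd]]; unfold cond_measure; split; [| split].
  - intro A.
    assert (Hle : mu (sub_image T A) <= mu T)
      by (apply fa_measure_mono; auto; apply sub_image_in).
    destruct (Hrange (sub_image T A)) as [Hge _].
    split.
    + unfold Rdiv; apply Rmult_le_pos; [lra | left; apply Rinv_0_lt_compat; lra].
    + apply Rmult_le_reg_r with (mu T); auto.
      unfold Rdiv; rewrite Rmult_assoc, Rinv_l; lra.
  - rewrite sub_image_full; field; lra.
  - intros A B HAB.
    rewrite sub_image_union, Hadd by (apply sub_image_disjoint; exact HAB).
    field; lra.
Qed.

Variables (mul : U -> U -> U) (hT : mul_closed mul T).

Lemma cond_measure_left_invariant :
  left_fairly_invariant mul mu -> left_fairly_invariant (sub_mul mul T hT) cond_measure.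
Proof.
  intros Hinv s A Hinj; unfold cond_measure.
  rewrite (sub_image_lmul U T mul hT), Hinv; [reflexivity |].
  exact (sub_image_inj_left U T mul hT s A Hinj).
Qed.

Lemma cond_measure_right_invariant :
  right_fairly_invariant mul mu -> right_fairly_invariant (sub_mul mul T hT) cond_measure.
Proof.
  intros Hinv s A Hinj; unfold cond_measure.
  rewrite (sub_image_rmul U T mul hT), Hinv; [reflexivity |].
  exact (sub_image_inj_right U T mul hT s A Hinj).
Qed.

End ConditionalMeasure.

Arguments cond_measure {U} mu T B.

Theorem mainTheorem13 (U : Type) (mul : U -> U -> U) (hassoc : associative_op mul)
  (T : U -> Prop) (hT : mul_closed mul T) :
  (forall mu : (U -> Prop) -> R,
     fa_prob_measure mu -> left_fairly_invariant mul mu -> 0 < mu T ->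
     left_fairly_amenable {x : U | T x} (sub_mul mul T hT)) /\
  (forall mu : (U -> Prop) -> R,
     fa_prob_measure mu -> right_fairly_invariant mul mu -> 0 < mu T ->
     right_fairly_amenable {x : U | T x} (sub_mul mul T hT)).
Proof.
  split; intros mu Hmu Hinv HT; exists (cond_measure mu T); split.
  - apply cond_measure_prob; assumption.
  - apply cond_measure_left_invariant; assumption.
  - apply cond_measure_prob; assumption.
  - apply cond_measure_right_invariant; assumption.
Qed.
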